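(* Let $\varSigma$ be a $2k$-dimensional rational sphere on vertex set $[n]$, equipped with a linear system of parameters (vertex coordinates in $\mathbb{R}^{2k+1}$), and suppose $\mathcal{A}^*(\varSigma)$ has the hard Lefschetz property. Then for every subcomplex $\varDelta$ of $\varSigma$, $$(k+2)\,f_{k-1}(\varDelta)\ \ge\ f_k(\varDelta),$$ where $f_j(\varDelta)$ is the number of $j$-dimensional faces of $\varDelta$.
   Context: A $2k$-dimensional rational sphere is a simplicial complex that is a rational homology manifold (links of nonempty faces $\sigma$ have the rational homology of $S^{2k-|\sigma|}$) with the rational homology of $S^{2k}$. With $d=2k+1$, a linear system of parameters is a $d$-tuple of linear forms $\theta_j=\sum_iv_{i,j}x_i$ such that the vertex points $v_i\in\mathbb{R}^d$ of each face are linearly independent; $\mathcal{A}^*(\varSigma)=\mathbb{R}[\varSigma]/(\theta_1,\dots,\theta_d)$, where $\mathbb{R}[\varSigma]$ is the face ring (polynomial ring modulo squarefree monomials whose support is not a face). The hard Lefschetz property means there is $\ell\in\mathcal{A}^1(\varSigma)$ such that multiplication by $\ell^{d-2j}$ is an isomorphism $\mathcal{A}^j(\varSigma)\to\mathcal{A}^{d-j}(\varSigma)$ for all $j\le d/2$. *)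

From HB Require Import structures.
From mathcomp Require Import all_boot all_order all_algebra.
From mathcomp Require Import reals.
From mathcomp Require Import mpoly.

Set Implicit Arguments.
Unset Strict Implicit.
Unset Printing Implicit Defensive.

Import Order.TTheory GRing.Theory Num.Theory.
Local Open Scope ring_scope.

Definition complex_on (n : nat) := {set {set 'I_n}}.

Definition is_simplicial_complex (n : nat) (K : complex_on n) : Prop :=
  set0 \in K /\ forall s t : {set 'I_n}, s \in K -> t \subset s -> t \in K.

Definition faces_of_size (n : nat) (K : complex_on n) (s : nat) : {set {set 'I_n}} :=
  [set x in K | #|x| == s].

(* f_j(K) = number of j-dimensional faces = faces of cardinality j+1.
   We index by cardinality: fsize K s = f_{s-1}(K). *)
Definition fsize (n : nat) (K : complex_on n) (s : nat) : nat := #|faces_of_size K s|.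

Definition link (n : nat) (K : complex_on n) (sg : {set 'I_n}) : complex_on n :=
  [set t in K | [disjoint t & sg] && ((t :|: sg) \in K)].

Definition inc_sign (n : nat) (sg tau : {set 'I_n}) : rat :=
  (-1) ^+ (\sum_(v in sg :\: tau) #|[set u in sg | u < v]|)%N.

(* Simplicial boundary map from the chains on faces of cardinality s to those
   of cardinality s-1 (s >= 1), over Q, written as a square matrix indexed by
   all subsets of [n] (rows/columns of non-faces or of other sizes are zero,
   which does not change the rank). *)
Definition boundary_mx (n : nat) (K : complex_on n) (s : nat)
  : 'M[rat]_(#|{: {set 'I_n}}|) :=
  \matrix_(i, j)
    (let sg : {set 'I_n} := enum_val i in let tau : {set 'I_n} := enum_val j in
     if [&& (0 < s)%N, sg \in K, #|sg| == s, tau \subset sg & #|tau| == s.-1]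
     then inc_sign sg tau else 0).

(* Reduced rational Betti number of K in dimension s-1 (cardinality index s);
   the empty face contributes the (-1)-dimensional chain group. *)
Definition rbetti (n : nat) (K : complex_on n) (s : nat) : nat :=
  (fsize K s - \rank (boundary_mx K s) - \rank (boundary_mx K s.+1))%N.

(* K has the rational (reduced) homology of the sphere S^m, m >= -1,
   where the sphere dimension is encoded by its cardinality index m+1 = ms. *)
Definition rational_homology_sphere_idx (n : nat) (K : complex_on n) (ms : nat) : Prop :=
  forall s : nat, rbetti K s = (s == ms)%N.

Definition rational_sphere (n k : nat) (S : complex_on n) : Prop :=
  [/\ is_simplicial_complex S,
      (forall i : 'I_n, [set i] \in S),
      (forall sg, sg \in S -> (#|sg| <= 2 * k + 1)%N),
      rational_homology_sphere_idx S (2 * k + 1)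
    & (forall sg, sg \in S -> sg != set0 ->                 (* rational homology manifold *)
         rational_homology_sphere_idx (link S sg) (2 * k + 1 - #|sg|))].

(* Linear system of parameters, given by the vertex coordinates V (row i = v_i):
   for every face, the points v_i (i in the face) are linearly independent. *)
Definition is_lsop (R : realType) (n d : nat) (S : complex_on n) (V : 'M[R]_(n, d)) : Prop :=
  forall sg, sg \in S ->
    forall c : 'I_n -> R,
      \sum_(i in sg) c i *: row i V = 0 -> forall i, i \in sg -> c i = 0.

Definition theta (R : realType) (n d : nat) (V : 'M[R]_(n, d)) (j : 'I_d) : {mpoly R[n]} :=
  \sum_(i < n) V i j *: 'X_i.

Definition sqfree_monomial (R : realType) (n : nat) (tau : {set 'I_n}) : {mpoly R[n]} :=
  \prod_(i in tau) 'X_i.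

(* Membership in the ideal I_S + (theta_1, ..., theta_d) of R[x_1..x_n], where
   I_S is the Stanley-Reisner ideal generated by the squarefree monomials whose
   support is not a face. A(S) = R[x]/(this ideal). *)
Definition in_lsop_ideal (R : realType) (n d : nat) (S : complex_on n)
    (V : 'M[R]_(n, d)) (f : {mpoly R[n]}) : Prop :=
  exists (g : 'I_d -> {mpoly R[n]}) (h : {set 'I_n} -> {mpoly R[n]}),
    f = \sum_(j < d) theta V j * g j
        + \sum_(tau | tau \notin S) h tau * sqfree_monomial R tau.

(* Hard Lefschetz property of A*(S) = R[S]/(theta): there is l in A^1
   (represented by a linear form) such that multiplication by l^(d-2j) is an
   isomorphism A^j -> A^(d-j) for all j <= d/2.  A^j is the quotient of the
   homogeneous degree-j polynomials by the degree-j part of the (homogeneous)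
   ideal; injectivity and surjectivity of the induced map are spelled out. *)
Definition hard_lefschetz (R : realType) (n d : nat) (S : complex_on n)
    (V : 'M[R]_(n, d)) : Prop :=
  exists l : {mpoly R[n]}, l \is [in R[n], 1.-homog] /\
    forall j : nat, (2 * j <= d)%N ->
      (forall p : {mpoly R[n]}, p \is [in R[n], j.-homog] ->
          in_lsop_ideal S V (l ^+ (d - 2 * j) * p) -> in_lsop_ideal S V p)
      /\
      (forall q : {mpoly R[n]}, q \is [in R[n], (d - j).-homog] ->
          exists2 p : {mpoly R[n]}, p \is [in R[n], j.-homog] &
            in_lsop_ideal S V (q - l ^+ (d - 2 * j) * p)).

(* Write A(D) = R[x] / (I_D + (theta)) for a subcomplex D of S; it is a quotient
   of A(S).  Hard Lefschetz makes multiplication by l : A^k(S) -> A^(k+1)(S)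
   onto, hence also A^k(D) -> A^(k+1)(D).  As the v_i are independent on faces,
   the relations theta rewrite every monomial of degree k through squarefree
   monomials of (k-1)-faces, so dim A^k(D) <= f_(k-1)(D).  Conversely every
   stress in the sense of Lee on the k-faces of D extends, by descending
   induction on the size of the support of the monomials, to a linear
   functional on A^(k+1)(D); stresses are cut out by (d - k) f_(k-1)(D) linear
   conditions, d = 2k + 1.  Hence
   f_k(D) - (k + 1) f_(k-1)(D) <= dim A^(k+1)(D) <= f_(k-1)(D). *)

From HB Require Import structures.
From mathcomp Require Import all_boot all_order all_algebra.
From mathcomp Require Import reals.
From mathcomp Require Import mpoly ssrcomplements.
From mathcomp Require Import zify.
From mathcomp Require boolp.

Set Implicit Arguments.
Unset Strict Implicit.
Unset Printing Implicit Defensive.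
Import Order.TTheory GRing.Theory Num.Theory.

Section Monomials.
Variable n : nat.
Implicit Types (m : 'X_{1..n}) (t : {set 'I_n}).
Local Open Scope nat_scope.

Definition mnm_supp m : {set 'I_n} := [set i | m i != 0].
Definition sqfree_mnm t : 'X_{1..n} := (\sum_(i in t) U_(i))%MM.

Lemma sqfree_mnmE t i : sqfree_mnm t i = (i \in t).
Proof.
rewrite /sqfree_mnm mnm_sumE (eq_bigr (fun j => (j == i) : nat)); last first.
  by move=> j _; rewrite mnm1E.
rewrite big_mkcond /= (bigD1 i) //= big1 ?addn0; first by rewrite eqxx; case: (i \in t).
by move=> j /negbTE ->; case: (j \in t).
Qed.

Lemma mnm_supp_sqfree t : mnm_supp (sqfree_mnm t) = t.
Proof. by apply/setP=> i; rewrite inE sqfree_mnmE; case: (i \in t). Qed.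

Lemma mdeg_sqfree_mnm t : mdeg (sqfree_mnm t) = #|t|.
Proof.
rewrite mdegE (eq_bigr (fun i => (i \in t) : nat)) => [|i _]; last by rewrite sqfree_mnmE.
by rewrite -sum1_card [RHS]big_mkcond; apply: eq_bigr => i _; case: (i \in t).
Qed.

Lemma mnm_suppD m1 m2 : mnm_supp (m1 + m2)%MM = mnm_supp m1 :|: mnm_supp m2.
Proof. by apply/setP=> i; rewrite !inE mnmDE addn_eq0 negb_and. Qed.

Lemma mnm_supp1 i : mnm_supp U_(i)%MM = [set i].
Proof. by apply/setP=> j; rewrite !inE mnm1E eqb0 negbK eq_sym. Qed.

Lemma mnm_suppDl m1 m2 : mnm_supp m1 \subset mnm_supp (m1 + m2)%MM.
Proof. by rewrite mnm_suppD subsetUl. Qed.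

Lemma mnm_suppU1_in m i : i \in mnm_supp m -> mnm_supp (m + U_(i))%MM = mnm_supp m.
Proof. by move=> im; rewrite mnm_suppD mnm_supp1; apply/setUidPl; rewrite sub1set. Qed.

Lemma card_mnm_suppU1 m i :
  i \notin mnm_supp m -> #|mnm_supp (m + U_(i))%MM| = #|mnm_supp m|.+1.
Proof. by move=> im; rewrite mnm_suppD mnm_supp1 setUC cardsU1 im. Qed.

Lemma mdegU1 m i : mdeg (m + U_(i))%MM = (mdeg m).+1.
Proof. by rewrite mdegD mdeg1 addn1. Qed.

Lemma card_mnm_supp_le m : #|mnm_supp m| <= mdeg m.
Proof.
rewrite mdegE -sum1_card big_mkcond /=; apply: leq_sum => i _.
by rewrite inE; case: (m i).
Qed.

Lemma card_mnm_supp_lt m u : 1 < m u -> #|mnm_supp m| < mdeg m.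
Proof.
move=> mu; rewrite mdegE -sum1_card big_mkcond /= (bigD1 u) //= (bigD1 u (P := predT)) //=.
rewrite inE -addSn leq_add //; first by case: (m u) mu.
by apply: leq_sum => i _; rewrite inE; case: (m i).
Qed.

Lemma mnm_sqfreeVrepeat m : sqfree_mnm (mnm_supp m) = m \/ exists u, 1 < m u.
Proof.
have [/forallP le1|] := boolP [forall u, m u <= 1]; last first.
  by rewrite negb_forall => /existsP [u]; rewrite -ltnNge; right; exists u.
left; apply/mnmP => i; rewrite sqfree_mnmE inE; have := le1 i.
by case: (m i) => [|[|]].
Qed.

Lemma mnm_suppBU1 m u : 1 < m u -> mnm_supp (m - U_(u))%MM = mnm_supp m.
Proof.
move=> mu; apply/setP=> i; rewrite !inE mnmBE mnm1E.
by case: (u =P i) => [<-|_] /=; [case: (m u) mu => [|[|]] | rewrite subn0].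
Qed.

Lemma subU1mK m u : u \in mnm_supp m -> (m - U_(u) + U_(u))%MM = m.
Proof. by rewrite inE => mu; apply: submK; rewrite lep1mP. Qed.

Lemma sqfree_mnmU1 t x : x \notin t -> (sqfree_mnm t + U_(x))%MM = sqfree_mnm (x |: t).
Proof.
move=> xt; apply/mnmP => i; rewrite mnmDE !sqfree_mnmE mnm1E !inE eq_sym.
by case: (i =P x) => [->|_]; rewrite ?(negbTE xt) ?addn0.
Qed.

Lemma addmAC m1 m2 m3 : (m1 + m2 + m3 = m1 + m3 + m2)%MM.
Proof. by rewrite -addmA [(m2 + _)%MM]addmC addmA. Qed.

End Monomials.

Section Pairing.
Variables (R : nzRingType) (n : nat) (phi : 'X_{1..n} -> R).
Local Open Scope ring_scope.

Definition mpairing (p : {mpoly R[n]}) : R := \sum_(m <- msupp p) p@_m * phi m.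

Lemma mpairingE p i : (msize p <= i)%N ->
  mpairing p = \sum_(m : 'X_{1..n < i}) p@_m * phi m.
Proof.
move=> le_pi; rewrite /mpairing (big_mksub 'X_{1..n < i}) ?msupp_uniq //=; last first.
  by move=> x /msize_mdeg_lt /leq_trans; apply.
by rewrite big_rmcond //= => m /memN_msupp_eq0 ->; rewrite mul0r.
Qed.

Lemma mpairing_is_zmod_morphism : zmod_morphism mpairing.
Proof.
move=> p q; pose i := maxn (msize p) (msize q).
have le_p : (msize p <= i)%N by rewrite leq_maxl.
have le_q : (msize q <= i)%N by rewrite leq_maxr.
have le_pq : (msize (p - q) <= i)%N.
  by apply: leq_trans (msizeD_le _ _) _; rewrite msizeN geq_max le_p le_q.
rewrite !(mpairingE le_p) !(mpairingE le_q) (mpairingE le_pq) -sumrB.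
by apply/eq_bigr => m _; rewrite mcoeffB mulrBl.
Qed.

HB.instance Definition _ := GRing.isZmodMorphism.Build {mpoly R[n]} R mpairing
  mpairing_is_zmod_morphism.

Lemma mpairingZ c p : mpairing (c *: p) = c * mpairing p.
Proof.
rewrite (mpairingE (leqnn (msize p))) (mpairingE (msizeZ_le p c)) mulr_sumr.
by apply/eq_bigr => m _; rewrite mcoeffZ mulrA.
Qed.

Lemma mpairingX m : mpairing 'X_[m] = phi m.
Proof. by rewrite /mpairing msuppX big_seq1 mcoeffX eqxx mul1r. Qed.

Lemma mpairingMX p m :
  mpairing (p * 'X_[m]) = \sum_(m' <- msupp p) p@_m' * phi (m' + m)%MM.
Proof.
rewrite {1}[p]mpolyE mulr_suml raddf_sum /=; apply/eq_bigr => m' _.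
by rewrite -scalerAl -mpolyXD mpairingZ mpairingX.
Qed.

End Pairing.

Section DualBasis.
Variables (F : fieldType) (n d : nat) (V : 'M[F]_(n, d)).
Local Open Scope ring_scope.

Definition lform (M : 'I_d -> F) (w : 'I_n) : F := \sum_l M l * V w l.

Lemma dual_basis (rho : {set 'I_n}) :
  (forall c : 'I_n -> F, \sum_(i in rho) c i *: row i V = 0 ->
     forall i, i \in rho -> c i = 0) ->
  exists L : 'I_n -> 'I_d -> F,
    forall u x, u \in rho -> x \in rho -> lform (L u) x = (u == x)%:R.
Proof.
move=> indep; pose B : 'M[F]_(#|rho|, d) := \matrix_(i, l) V (enum_val i) l.
have enum_val_eq (j j' : 'I_#|rho|) : (enum_val j == enum_val j' :> 'I_n) = (j == j').
  by rewrite (inj_eq enum_val_inj).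
pose of_row (r : 'rV[F]_#|rho|) (x : 'I_n) := \sum_(j | enum_val j == x) r 0 j.
have of_rowE r j : of_row r (enum_val j) = r 0 j.
  by rewrite /of_row (eq_bigl (pred1 j)) ?big_pred1_eq // => j'; rewrite /= enum_val_eq.
have free_B : row_free B.
  rewrite -kermx_eq0 -submx0; apply/row_subP => i; rewrite submx0.
  set r := row i (kermx B); have rB : r *m B = 0 by rewrite -row_mul mulmx_ker row0.
  have : \sum_(x in rho) of_row r x *: row x V = 0.
    rewrite (big_enum_val (fun x => of_row r x *: row x V)) /= -[RHS]rB.
    by apply/rowP => l; rewrite summxE !mxE; apply: eq_bigr => j _; rewrite of_rowE !mxE.
  by move/indep => r0; apply/eqP/rowP => j; rewrite [RHS]mxE -of_rowE r0 ?enum_valP.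
have [B' BB'] := row_freeP free_B.
exists (fun u l => of_row (row l B') u) => u x u_rho x_rho.
rewrite -(enum_rankK_in u_rho u_rho) -(enum_rankK_in u_rho x_rho).
set ju := enum_rank_in u_rho u; set jx := enum_rank_in u_rho x.
transitivity ((B *m B') jx ju); last by rewrite BB' mxE enum_val_eq eq_sym.
by rewrite mxE; apply: eq_bigr => l _; rewrite of_rowE !mxE mulrC.
Qed.

Lemma exists_dual_family (D : complex_on n) :
  (forall rho, rho \in D -> forall c : 'I_n -> F,
     \sum_(i in rho) c i *: row i V = 0 -> forall i, i \in rho -> c i = 0) ->
  exists L : {set 'I_n} -> 'I_n -> 'I_d -> F, forall rho, rho \in D ->
    forall u x, u \in rho -> x \in rho -> lform (L rho u) x = (u == x)%:R.
Proof.
move=> indep.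
suff /boolp.choice[L dualL] : forall rho, exists L : 'I_n -> 'I_d -> F, rho \in D ->
    forall u x, u \in rho -> x \in rho -> lform (L u) x = (u == x)%:R by exists L.
move=> rho; have [/indep/dual_basis [L dualL]|_] := boolP (rho \in D); first by exists L.
by exists (fun _ _ => 0).
Qed.

End DualBasis.

Lemma mxrank_bigcap_codim (F : fieldType) (m : nat) (I : finType) (P : pred I)
    (K : I -> 'M[F]_m) :
  (m <= \rank (\bigcap_(i | P i) K i)%MS + \sum_(i | P i) (m - \rank (K i)))%N.
Proof.
elim/big_rec2: _ => [|i X s Pi IH]; first by rewrite mxrank1 addn0.
have := mxrank_sum_cap (K i) X; have := rank_leq_col (K i + X)%MS.
have := rank_leq_col (K i); lia.
Qed.

Section Annihilators.
Local Open Scope ring_scope.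
Variables (F : fieldType) (n d : nat) (V : 'M[F]_(n, d)) (D : complex_on n).
Hypothesis D_closed : forall s t : {set 'I_n}, s \in D -> t \subset s -> t \in D.
Variable L : {set 'I_n} -> 'I_n -> 'I_d -> F.
Hypothesis L_dual : forall rho, rho \in D -> forall u x, u \in rho -> x \in rho ->
  lform V (L rho u) x = (u == x)%:R.
Implicit Types (m : 'X_{1..n}) (rho t sg : {set 'I_n}) (phi : 'X_{1..n} -> F).

(* A linear functional on [A(D)], given by its values on monomials.  Below,
   [theta_M] is the linear form [\sum_w lform V M w * 'X_w], a combination of
   the [theta j], so that [phi] also kills the multiples of [theta_M]. *)
Definition lsop_annihilator phi :=
  (forall m, mnm_supp m \notin D -> phi m = 0) /\
  (forall m j, \sum_i V i j * phi (m + U_(i))%MM = 0).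

Lemma mnm_suppD_notin m m' : mnm_supp m \notin D -> mnm_supp (m + m')%MM \notin D.
Proof. by apply: contra => /D_closed; apply; apply: mnm_suppDl. Qed.

Lemma lform_relation phi m M :
  (forall j, \sum_i V i j * phi (m + U_(i))%MM = 0) ->
  \sum_i lform V M i * phi (m + U_(i))%MM = 0.
Proof.
move=> rel; under eq_bigr do rewrite mulr_suml.
rewrite exchange_big big1 // => l _.
by under eq_bigr do rewrite -mulrA; rewrite -mulr_sumr rel mulr0.
Qed.

Lemma sum_lform_dual rho u (f : 'I_n -> F) : rho \in D -> u \in rho ->
  \sum_x lform V (L rho u) x * f x =
  f u + \sum_(x | x \notin rho) lform V (L rho u) x * f x.
Proof.
move=> rhoD u_rho; rewrite (bigID (mem rho)) /= (bigD1 u) //= L_dual // eqxx mul1r.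
rewrite big1 ?addr0 // => x /andP [x_rho xu].
by rewrite L_dual // eq_sym (negbTE xu) mul0r.
Qed.

Definition reducible m := exists a : {set 'I_n} -> F,
  forall phi, lsop_annihilator phi -> forall m',
    phi (m + m')%MM = \sum_(t in faces_of_size D (mdeg m)) a t * phi (sqfree_mnm t + m')%MM.

Lemma reducible_nonface m : mnm_supp m \notin D -> reducible m.
Proof.
move=> mD; exists (fun _ => 0) => phi [phi_face _] m'.
by rewrite phi_face ?mnm_suppD_notin // big1 // => t _; rewrite mul0r.
Qed.

Lemma reducible_sqfree m : mnm_supp m \in D -> sqfree_mnm (mnm_supp m) = m -> reducible m.
Proof.
move=> mD sqm; exists (fun t => (t == mnm_supp m)%:R) => phi _ m'.
have mT : mnm_supp m \in faces_of_size D (mdeg m).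
  by rewrite inE mD -{2}sqm mdeg_sqfree_mnm eqxx.
rewrite (bigD1 _ mT) /= eqxx mul1r sqm big1 ?addr0 // => t /andP [_ /negbTE ->].
by rewrite mul0r.
Qed.

(* The relation [theta_{L u}] at [m - u] expresses [x^m] through the monomials
   [m - u + w], [w \notin mnm_supp m]: the dual vector [L u] kills the other
   variables of the support. *)
Lemma reducible_exchange m u : mnm_supp m \in D -> (1 < m u)%N ->
  (forall w, w \notin mnm_supp m -> reducible (m - U_(u) + U_(w))%MM) -> reducible m.
Proof.
move=> mD mu red_w; set rho := mnm_supp m; set m1 := (m - U_(u))%MM.
have u_rho : u \in rho by rewrite inE; case: (m u) mu.
have m1K : (m1 + U_(u))%MM = m by apply: subU1mK.
have deg_w w : mdeg (m1 + U_(w))%MM = mdeg m by rewrite mdegU1 -(mdegU1 m1 u) m1K.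
have /boolp.choice [A HA] : forall w, exists a : {set 'I_n} -> F, w \notin rho ->
    forall phi, lsop_annihilator phi -> forall m', phi (m1 + U_(w) + m')%MM =
      \sum_(t in faces_of_size D (mdeg m)) a t * phi (sqfree_mnm t + m')%MM.
  move=> w; have [_|/red_w [a Ha]] := boolP (w \in rho); first by exists (fun _ => 0).
  by exists a; rewrite -(deg_w w).
exists (fun t => - \sum_(w | w \notin rho) lform V (L rho u) w * A w t) => phi ann m'.
have := lform_relation (L rho u) (ann.2 (m1 + m')%MM).
rewrite sum_lform_dual // addmAC m1K => /eqP; rewrite addr_eq0 => /eqP ->.
under [RHS]eq_bigr do rewrite mulNr mulr_suml.
rewrite sumrN exchange_big /=; congr (- _); apply: eq_bigr => w w_rho.
rewrite addmAC (HA w w_rho phi ann m') mulr_sumr.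
by apply: eq_bigr => t _; rewrite mulrA.
Qed.

Lemma mnm_reducible m : reducible m.
Proof.
move: {2}_.+1 (ltnSn (mdeg m - #|mnm_supp m|)) => e.
elim: e m => // e IH m lt_me.
have [mD|/reducible_nonface//] := boolP (mnm_supp m \in D).
have [/(reducible_sqfree mD)//|[u mu]] := mnm_sqfreeVrepeat m.
have u_m : u \in mnm_supp m by rewrite inE; case: (m u) mu.
apply: (reducible_exchange mD mu) => w w_m; apply: IH.
have deg_m : mdeg m = (mdeg (m - U_(u))).+1 by rewrite -(mdegU1 _ u) subU1mK.
rewrite mdegU1 card_mnm_suppU1 ?mnm_suppBU1 //.
by have := card_mnm_supp_lt mu; lia.
Qed.

Section Stresses.
Variable k : nat.

(* [lform (quotient_form t j)] sends [v_x] to the [j]-th coordinate of its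
   component along the complement of the span of the [v_u], [u \in t], cut out
   by the dual vectors [L t]. *)
Definition quotient_form t (j : 'I_d) (l : 'I_d) : F :=
  (l == j)%:R - \sum_(u in t) L t u l * V u j.

Lemma lform_quotient_formE t j w :
  lform V (quotient_form t j) w = V w j - \sum_(u in t) lform V (L t u) w * V u j.
Proof.
rewrite /lform /quotient_form; under eq_bigr do rewrite mulrBl.
rewrite sumrB (bigD1 j) //= eqxx mul1r big1 ?addr0 => [|l /negbTE ->]; last first.
  by rewrite mul0r.
congr (_ - _); under eq_bigr do rewrite mulr_suml.
rewrite exchange_big /=; apply: eq_bigr => u _; rewrite mulr_suml.
by apply: eq_bigr => l _; rewrite mulrAC.
Qed.

Lemma lform_quotient_form_face t j w :
  t \in D -> w \in t -> lform V (quotient_form t j) w = 0.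
Proof.
move=> tD wt; rewrite lform_quotient_formE (bigD1 w) //= L_dual // eqxx mul1r.
rewrite big1 ?addr0 ?subrr // => u /andP [ut /negbTE uw].
by rewrite L_dual // uw mul0r.
Qed.

(* Lee's stresses on the [k]-faces: around every [(k-1)]-face [t], the sum of
   the [c (x |: t) v_x] lies in the span of the [v_u], [u \in t]. *)
Definition stress (c : {set 'I_n} -> F) :=
  (forall sg, c sg != 0 -> sg \in faces_of_size D k.+1) /\
  (forall t, t \in faces_of_size D k -> forall j,
     \sum_(x | x \notin t) lform V (quotient_form t j) x * c (x |: t) = 0).

Section Extension.
Variable c : {set 'I_n} -> F.
Hypothesis c_stress : stress c.

Definition partial_extension (s : nat) phi :=
  [/\ forall m, phi m != 0 ->
        [&& mnm_supp m \in D, mdeg m == k.+1 & (s <= #|mnm_supp m|)%N],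
      forall m j, (s <= #|mnm_supp m|)%N -> \sum_i V i j * phi (m + U_(i))%MM = 0
    & forall sg, #|sg| = k.+1 -> phi (sqfree_mnm sg) = c sg].

Lemma partial_extension_top : exists phi, partial_extension k.+1 phi.
Proof.
have [c_face _] := c_stress.
exists (fun m => if (mdeg m == k.+1) && (#|mnm_supp m| == k.+1) then c (mnm_supp m) else 0).
split.
- move=> m; case: ifP => [/andP [/eqP -> /eqP ->]|]; last by rewrite eqxx.
  by move/c_face; rewrite inE => /andP [-> _]; rewrite !eqxx leqnn.
- move=> m j le_km; apply: big1 => i _.
  case: ifP => [/andP [/eqP deg _]|_]; last by rewrite mulr0.
  by have := card_mnm_supp_le m; rewrite mdegU1 in deg; lia.
- by move=> sg sgk; rewrite mdeg_sqfree_mnm mnm_supp_sqfree sgk eqxx.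
Qed.

Section ExtensionStep.
Variables (s : nat) (phi : 'X_{1..n} -> F).
Hypothesis phi_ext : partial_extension s.+1 phi.
Hypothesis s_le_k : (s <= k)%N.

Lemma partial_ext_small m : (#|mnm_supp m| <= s)%N -> phi m = 0.
Proof.
case: phi_ext => phi_supp _ _ le_ms; apply/eqP.
by apply: contraTT le_ms => /phi_supp /and3P [_ _]; lia.
Qed.

Lemma partial_ext_deg m : mdeg m != k.+1 -> phi m = 0.
Proof.
case: phi_ext => phi_supp _ _; apply: contraNeq => /phi_supp /and3P [_ -> _] //.
Qed.

Lemma partial_ext_lform m M : (s < #|mnm_supp m|)%N ->
  \sum_i lform V M i * phi (m + U_(i))%MM = 0.
Proof. by case: phi_ext => _ rel _ lt_sm; apply: lform_relation => j; apply: rel. Qed.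

(* For [#|mnm_supp m| = s], [theta2 M N m] is the value at [x^m theta_M theta_N]
   (see [theta2E]), which is symmetric in [M] and [N]. *)
Definition theta2 (M N : 'I_d -> F) m :=
  \sum_(w in mnm_supp m) \sum_x lform V M w * lform V N x * phi (m + U_(w) + U_(x))%MM.

Lemma theta2E M N m : #|mnm_supp m| = s -> theta2 M N m =
  \sum_w \sum_x lform V M w * lform V N x * phi (m + U_(w) + U_(x))%MM.
Proof.
move=> card_m; rewrite [RHS](bigID (mem (mnm_supp m))) /= [X in _ + X]big1 ?addr0 //.
move=> w wm; under eq_bigr do rewrite -mulrA.
by rewrite -mulr_sumr partial_ext_lform ?mulr0 // card_mnm_suppU1 // card_m.
Qed.

Lemma theta2C M N m : #|mnm_supp m| = s -> theta2 M N m = theta2 N M m.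
Proof.
move=> card_m; rewrite !theta2E // exchange_big /=.
by apply: eq_bigr => w _; apply: eq_bigr => x _; rewrite addmAC [lform V M x * _]mulrC.
Qed.

Lemma theta2_dual m a N : mnm_supp m \in D -> a \in mnm_supp m ->
  theta2 (L (mnm_supp m) a) N m = \sum_x lform V N x * phi (m + U_(a) + U_(x))%MM.
Proof.
move=> mD am; rewrite /theta2 (bigD1 a) //= [X in _ + X]big1 ?addr0.
  by apply: eq_bigr => x _; rewrite L_dual // eqxx mul1r.
move=> w /andP [wm wa]; apply: big1 => x _.
by rewrite L_dual // eq_sym (negbTE wa) !mul0r.
Qed.

Lemma theta2_quotient m j N : mnm_supp m \in D ->
  theta2 (quotient_form (mnm_supp m) j) N m = 0.
Proof.
move=> mD; apply: big1 => w wm; apply: big1 => x _.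
by rewrite lform_quotient_form_face // !mul0r.
Qed.

(* On supports of size [s] the value at [x^m] is forced by the relation
   [theta_{L u}] at [m - u], for any repeated variable [u] of [m]. *)
Definition extrapolate m u :=
  - \sum_w lform V (L (mnm_supp m) u) w * phi (m - U_(u) + U_(w))%MM.

Lemma extrapolate_indep m a b : mnm_supp m \in D -> #|mnm_supp m| = s ->
  (1 < m a)%N -> (1 < m b)%N -> extrapolate m a = extrapolate m b.
Proof.
move=> mD card_m ma mb; have [<-//|ab] := eqVneq a b.
set m2 := (m - U_(a) - U_(b))%MM.
have mab : (1 < (m - U_(a))%MM b)%N by rewrite mnmBE mnm1E (negbTE ab) subn0.
have mba : (1 < (m - U_(b))%MM a)%N by rewrite mnmBE mnm1E eq_sym (negbTE ab) subn0.
have supp2 : mnm_supp m2 = mnm_supp m by rewrite !mnm_suppBU1.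
have a2 : a \in mnm_supp m2 by rewrite supp2 inE; case: (m a) ma.
have b2 : b \in mnm_supp m2 by rewrite supp2 inE; case: (m b) mb.
have m2a : (m - U_(a))%MM = (m2 + U_(b))%MM.
  by rewrite /m2 (@subU1mK _ (m - U_(a))%MM) // inE; case: (_ b) mab.
have m2b : (m - U_(b))%MM = (m2 + U_(a))%MM.
  rewrite /m2 submDA [(U_(a) + _)%MM]addmC -submDA (@subU1mK _ (m - U_(b))%MM) //.
  by rewrite inE; case: (_ a) mba.
have m2D : mnm_supp m2 \in D by rewrite supp2.
rewrite /extrapolate m2a m2b -supp2 -(theta2_dual _ m2D b2) -(theta2_dual _ m2D a2).
by rewrite theta2C // supp2.
Qed.

(* If [m] has a repeated variable [u], the sum is [theta2 (L u) Q (m - u)] for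
   the quotient form [Q], hence [theta2 Q (L u) (m - u) = 0]; if [m] is
   squarefree, it is the balance condition of [c] around [mnm_supp m]. *)
Lemma partial_ext_quotient m j : mnm_supp m \in D -> #|mnm_supp m| = s ->
  \sum_x lform V (quotient_form (mnm_supp m) j) x * phi (m + U_(x))%MM = 0.
Proof.
move=> mD card_m.
have [deg_m|deg_m] := eqVneq (mdeg m) k; last first.
  by apply: big1 => x _; rewrite partial_ext_deg ?mulr0 // mdegU1 eqSS.
have [sqm|[u mu]] := mnm_sqfreeVrepeat m; last first.
  set m2 := (m - U_(u))%MM.
  have supp2 : mnm_supp m2 = mnm_supp m by rewrite mnm_suppBU1.
  have u2 : u \in mnm_supp m2 by rewrite supp2 inE; case: (m u) mu.
  have m2K : (m2 + U_(u))%MM = m by rewrite subU1mK // -supp2.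
  have m2D : mnm_supp m2 \in D by rewrite supp2.
  rewrite -supp2 -m2K -(theta2_dual _ m2D u2) theta2C ?supp2 //.
  by rewrite -{1}supp2 theta2_quotient.
have [_ c_bal] := c_stress; case: phi_ext => _ _ phi_c.
have card_k : #|mnm_supp m| = k by rewrite -deg_m -{2}sqm mdeg_sqfree_mnm.
have mT : mnm_supp m \in faces_of_size D k by rewrite inE mD card_k eqxx.
rewrite (bigID (mem (mnm_supp m))) /= big1 ?add0r => [|x xm]; last first.
  by rewrite lform_quotient_form_face ?mul0r.
rewrite -[RHS](c_bal _ mT j); apply: eq_bigr => x xm.
by rewrite -[in phi _]sqm sqfree_mnmU1 // phi_c // cardsU1 xm card_k.
Qed.

Definition extend_step m :=
  if [&& #|mnm_supp m| == s, mdeg m == k.+1 & mnm_supp m \in D] then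
    if [pick u | (1 < m u)%N] is Some u then extrapolate m u else 0
  else phi m.

Lemma extend_step_out m : #|mnm_supp m| != s -> extend_step m = phi m.
Proof. by move=> card_m; rewrite /extend_step (negbTE card_m). Qed.

Lemma extend_step_supp m : extend_step m != 0 ->
  [&& mnm_supp m \in D, mdeg m == k.+1 & (s <= #|mnm_supp m|)%N].
Proof.
rewrite /extend_step; case: ifP => [/and3P [/eqP -> -> ->] _|_]; first by rewrite leqnn.
by case: phi_ext => phi_supp _ _ /phi_supp /and3P [-> -> /ltnW].
Qed.

Lemma extend_step_nonface m : mnm_supp m \notin D -> extend_step m = 0.
Proof. by apply: contraNeq => /extend_step_supp /and3P []. Qed.

Lemma extend_step_deg m : mdeg m != k.+1 -> extend_step m = 0.
Proof. by apply: contraNeq => /extend_step_supp /and3P []. Qed.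

Lemma extend_stepU1 m i : mnm_supp m \in D -> #|mnm_supp m| = s -> mdeg m = k ->
  i \in mnm_supp m ->
  extend_step (m + U_(i))%MM = - \sum_w lform V (L (mnm_supp m) i) w * phi (m + U_(w))%MM.
Proof.
move=> mD card_m deg_m im; have suppU1 := mnm_suppU1_in im.
have mi : (1 < (m + U_(i))%MM i)%N.
  by move: im; rewrite inE mnmDE mnm1E eqxx addn1 ltnS lt0n.
rewrite /extend_step suppU1 card_m mdegU1 deg_m mD !eqxx /=.
case: pickP => [u mu|/(_ i)]; last by rewrite mi.
by rewrite (extrapolate_indep _ _ mu mi) ?suppU1 // /extrapolate suppU1 addmK.
Qed.

Lemma partial_ext_quotientE m j : #|mnm_supp m| = s ->
  \sum_x lform V (quotient_form (mnm_supp m) j) x * phi (m + U_(x))%MM =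
  \sum_(x | x \notin mnm_supp m) V x j * phi (m + U_(x))%MM -
  \sum_(u in mnm_supp m) V u j *
    \sum_x lform V (L (mnm_supp m) u) x * phi (m + U_(x))%MM.
Proof.
move=> card_m; under eq_bigr do rewrite lform_quotient_formE mulrBl mulr_suml.
rewrite sumrB (bigID (mem (mnm_supp m))) /= [X in X + _ - _]big1 ?add0r => [|x xm]; last first.
  by rewrite partial_ext_small ?mulr0 // mnm_suppU1_in // card_m.
congr (_ - _); rewrite exchange_big /=; apply: eq_bigr => u _.
by rewrite mulr_sumr; apply: eq_bigr => x _; rewrite mulrCA mulrA.
Qed.

Lemma extend_step_relation m j : (s <= #|mnm_supp m|)%N ->
  \sum_i V i j * extend_step (m + U_(i))%MM = 0.
Proof.
rewrite leq_eqVlt => /orP [/eqP card_m|lt_sm]; last first.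
  case: phi_ext => _ rel _; rewrite -[RHS](rel m j lt_sm); apply: eq_bigr => i _.
  by rewrite extend_step_out //; have := subset_leq_card (mnm_suppDl m U_(i)); lia.
have [mD|mD] := boolP (mnm_supp m \in D); last first.
  by apply: big1 => i _; rewrite extend_step_nonface ?mulr0 // mnm_suppD_notin.
have [deg_m|deg_m] := eqVneq (mdeg m) k; last first.
  by apply: big1 => i _; rewrite extend_step_deg ?mulr0 // mdegU1 eqSS.
rewrite (bigID (mem (mnm_supp m))) /=.
under eq_bigr => i im do rewrite extend_stepU1 // mulrN.
rewrite [X in _ + X](eq_bigr (fun i => V i j * phi (m + U_(i))%MM)) => [|i im]; last first.
  by rewrite extend_step_out // card_mnm_suppU1 // card_m gtn_eqF.
by rewrite sumrN addrC -partial_ext_quotientE -?card_m // partial_ext_quotient.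
Qed.

Lemma partial_extension_step : partial_extension s extend_step.
Proof.
split; [exact: extend_step_supp | exact: extend_step_relation |].
move=> sg card_sg; rewrite extend_step_out ?mnm_supp_sqfree ?card_sg; last by lia.
by case: phi_ext => _ _; apply.
Qed.

End ExtensionStep.

Lemma partial_extension_down i : (i <= k.+1)%N ->
  exists phi, partial_extension (k.+1 - i) phi.
Proof.
elim: i => [_|i IH lt_ik]; first by rewrite subn0; apply: partial_extension_top.
have [phi phi_ext] := IH (ltnW lt_ik); exists (extend_step (k - i) phi).
have -> : (k.+1 - i.+1 = k - i)%N by lia.
by apply: partial_extension_step; rewrite ?leq_subr // -subSn.
Qed.

Lemma stress_extends : exists phi, lsop_annihilator phi /\
  forall sg, #|sg| = k.+1 -> phi (sqfree_mnm sg) = c sg.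
Proof.
have [phi [phi_supp rel phi_c]] := partial_extension_down (leqnn k.+1).
rewrite subnn in phi_supp rel; exists phi; split=> //; split=> [m|m j]; last exact: rel.
by apply: contraNeq => /phi_supp /and3P [].
Qed.

End Extension.

Section StressCount.
Local Notation Ek := (faces_of_size D k.+1).
Local Notation Tk := (faces_of_size D k).

Definition cochain_of_row (r : 'rV[F]_#|Ek|) sg := \sum_i (enum_val i == sg)%:R * r 0 i.

Lemma cochain_of_rowE r i : cochain_of_row r (enum_val i) = r 0 i.
Proof.
rewrite /cochain_of_row (bigD1 i) //= eqxx mul1r big1 ?addr0 // => i' /negbTE i'i.
by rewrite (inj_eq enum_val_inj) i'i mul0r.
Qed.

Lemma cochain_of_row_out r sg : sg \notin Ek -> cochain_of_row r sg = 0.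
Proof.
move=> sgE; apply: big1 => i _; have [sgi|] := eqVneq (enum_val i) sg; last by rewrite mul0r.
by move: sgE; rewrite -sgi enum_valP.
Qed.

Definition star_mx t : 'M[F]_(#|Ek|, d) :=
  \matrix_(i, l) \sum_(x | x \notin t) (enum_val i == x |: t)%:R * V x l.

Definition quotient_mx t : 'M[F]_d := \matrix_(l, j) quotient_form t j l.

Definition stress_mx := (\bigcap_(t in Tk) kermx (star_mx t *m quotient_mx t))%MS.

Lemma mul_star_quotient_mx r t j : (r *m (star_mx t *m quotient_mx t)) 0 j =
  \sum_(x | x \notin t) lform V (quotient_form t j) x * cochain_of_row r (x |: t).
Proof.
have star_row l : (r *m star_mx t) 0 l =
    \sum_(x | x \notin t) cochain_of_row r (x |: t) * V x l.
  rewrite mxE; under eq_bigr do rewrite mxE mulr_sumr.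
  rewrite exchange_big /=; apply: eq_bigr => x _; rewrite mulr_suml.
  by apply: eq_bigr => i _; rewrite mulrA [r 0 i * _]mulrC.
rewrite mulmxA mxE; under eq_bigr do rewrite star_row mulr_suml.
rewrite exchange_big /=; apply: eq_bigr => x _.
rewrite /lform mulr_suml; apply: eq_bigr => l _.
by rewrite mxE mulrAC [RHS]mulrC mulrA.
Qed.

Lemma stress_mx_stress r : (r <= stress_mx)%MS -> stress (cochain_of_row r).
Proof.
move=> /sub_bigcapmxP r_ker; split=> [sg|t tT j].
  by apply: contraR => /cochain_of_row_out ->; rewrite eqxx.
by have /sub_kermxP r_t := r_ker t tT; rewrite -mul_star_quotient_mx r_t mxE.
Qed.

(* The rows [v_u], [u \in t], are independent and killed by [quotient_mx t]. *)
Lemma mxrank_quotient_mx t : t \in Tk -> (\rank (quotient_mx t) <= d - k)%N.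
Proof.
rewrite inE => /andP [tD /eqP card_t].
pose B : 'M[F]_(#|t|, d) := \matrix_(i, l) V (enum_val i) l.
pose B' : 'M[F]_(d, #|t|) := \matrix_(l, i) L t (enum_val i) l.
have lformE M i : lform V M (enum_val i) = \sum_l V (enum_val i) l * M l.
  by apply: eq_bigr => l _; rewrite mulrC.
have rank_B : \rank B = #|t|.
  apply/eqP/row_freeP; exists B'; apply/matrixP => i i'; rewrite !mxE.
  under eq_bigr do rewrite !mxE.
  by rewrite -lformE L_dual ?enum_valP // (inj_eq enum_val_inj) eq_sym.
have /sub_kermxP B_ker : B *m quotient_mx t = 0.
  apply/matrixP => i j; rewrite !mxE; under eq_bigr do rewrite !mxE.
  by rewrite -lformE lform_quotient_form_face ?enum_valP.
have := mxrankS B_ker; rewrite mxrank_ker rank_B card_t.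
have := rank_leq_row (quotient_mx t); lia.
Qed.

Lemma mxrank_stress_mx : (#|Ek| <= \rank stress_mx + #|Tk| * (d - k))%N.
Proof.
apply: leq_trans (mxrank_bigcap_codim (mem Tk) (fun t => kermx (star_mx t *m quotient_mx t))) _.
rewrite leq_add2l -sum_nat_const.
apply: leq_sum => t tT; rewrite mxrank_ker subKn ?rank_leq_row //.
exact: leq_trans (mxrankM_maxr _ _) (mxrank_quotient_mx tT).
Qed.

Lemma stress_count (alpha : {set 'I_n} -> {set 'I_n} -> F) :
  (forall c, stress c -> exists y : {set 'I_n} -> F,
     forall sg, sg \in Ek -> c sg = \sum_(t in Tk) alpha sg t * y t) ->
  (#|Ek| <= #|Tk| * (d - k).+1)%N.
Proof.
move=> stress_span.
pose A : 'M[F]_(#|Tk|, #|Ek|) := \matrix_(i, j) alpha (enum_val j) (enum_val i).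
have stress_sub_A : (stress_mx <= A)%MS.
  apply/row_subP => i; have [y Hy] := stress_span _ (stress_mx_stress (row_sub i stress_mx)).
  apply/submxP; exists (\row_(i' < #|Tk|) y (enum_val i')); apply/rowP => j.
  rewrite -[LHS]cochain_of_rowE Hy ?enum_valP // (big_enum_val (fun t => alpha _ t * y t)) /=.
  by rewrite mxE; apply: eq_bigr => i' _; rewrite !mxE mulrC.
have := mxrankS stress_sub_A; have := rank_leq_row A; have := mxrank_stress_mx.
rewrite mulnS; lia.
Qed.

End StressCount.
End Stresses.
End Annihilators.

Section Lefschetz.
Local Open Scope ring_scope.
Variables (R : realType) (n d : nat) (V : 'M[R]_(n, d)) (D : complex_on n).
Hypothesis D_closed : forall s t : {set 'I_n}, s \in D -> t \subset s -> t \in D.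
Variable L : {set 'I_n} -> 'I_n -> 'I_d -> R.
Hypothesis L_dual : forall rho, rho \in D -> forall u x, u \in rho -> x \in rho ->
  lform V (L rho u) x = (u == x)%:R.
Implicit Types (m : 'X_{1..n}) (phi : 'X_{1..n} -> R).

Lemma sqfree_monomialE (t : {set 'I_n}) : sqfree_monomial R t = 'X_[sqfree_mnm t].
Proof. by rewrite /sqfree_monomial mprodXE. Qed.

Lemma mpairing_lsop_ideal phi f :
  lsop_annihilator V D phi -> in_lsop_ideal D V f -> mpairing phi f = 0.
Proof.
move=> [phi_face rel] [g [h ->]].
rewrite raddfD /= !raddf_sum /= [X in _ + X]big1 ?addr0 => [|t tD]; last first.
  rewrite sqfree_monomialE mpairingMX big1 // => m _.
  rewrite phi_face ?mulr0 //; apply: contra tD => /D_closed; apply.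
  by rewrite mnm_suppD mnm_supp_sqfree subsetUr.
apply: big1 => j _; rewrite mulrC /theta mulr_sumr raddf_sum /=.
under eq_bigr do rewrite -scalerAr mpairingZ mpairingMX mulr_sumr.
rewrite exchange_big /= big1 // => m _.
by under eq_bigr do rewrite mulrCA; rewrite -mulr_sumr rel mulr0.
Qed.

Lemma mpairing_reduce m : exists a : {set 'I_n} -> R,
  forall phi, lsop_annihilator V D phi -> forall l, mpairing phi (l * 'X_[m]) =
    \sum_(t in faces_of_size D (mdeg m)) a t * mpairing phi (l * 'X_[sqfree_mnm t]).
Proof.
have [a Ha] := mnm_reducible D_closed L_dual m.
exists a => phi ann l; rewrite mpairingMX.
transitivity (\sum_(m' <- msupp l) \sum_(t in faces_of_size D (mdeg m))
                l@_m' * (a t * phi (sqfree_mnm t + m')%MM)).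
  by apply: eq_bigr => m' _; rewrite addmC (Ha phi ann) mulr_sumr.
rewrite exchange_big /=; apply: eq_bigr => t _.
by rewrite mpairingMX mulr_sumr; apply: eq_bigr => m' _; rewrite mulrCA addmC.
Qed.

Lemma lefschetz_stress_span k (l : {mpoly R[n]}) :
  (forall sg, sg \in faces_of_size D k.+1 -> exists2 p : {mpoly R[n]},
     p \is [in R[n], k.-homog] & in_lsop_ideal D V ('X_[sqfree_mnm sg] - l * p)) ->
  exists alpha : {set 'I_n} -> {set 'I_n} -> R,
    forall phi, lsop_annihilator V D phi -> forall sg, sg \in faces_of_size D k.+1 ->
    phi (sqfree_mnm sg) =
      \sum_(t in faces_of_size D k) alpha sg t * mpairing phi (l * 'X_[sqfree_mnm t]).
Proof.
move=> onto.
have /boolp.choice [p Hp] : forall sg, exists p : {mpoly R[n]}, sg \in faces_of_size D k.+1 ->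
    p \is [in R[n], k.-homog] /\ in_lsop_ideal D V ('X_[sqfree_mnm sg] - l * p).
  by move=> sg; have [/onto [p]|] := boolP (sg \in _); [exists p | exists 0].
have [a Ha] := boolp.choice mpairing_reduce.
exists (fun sg t => \sum_(m <- msupp (p sg)) (p sg)@_m * a m t) => phi ann sg sgE.
have [p_hom p_ideal] := Hp sg sgE.
move/eqP: (mpairing_lsop_ideal ann p_ideal); rewrite raddfB /= mpairingX subr_eq0 => /eqP ->.
rewrite {1}[p sg]mpolyE mulr_sumr raddf_sum /=.
under eq_bigr do rewrite -scalerAr mpairingZ.
under [RHS]eq_bigr do rewrite mulr_suml.
rewrite [RHS]exchange_big /=; apply: eq_big_seq => m m_p.
have deg_m : mdeg m = k by move/dhomogP: p_hom => /(_ m m_p).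
rewrite (Ha m phi ann) deg_m mulr_sumr.
by apply: eq_bigr => t _; rewrite mulrA.
Qed.

Lemma lefschetz_face_bound k (l : {mpoly R[n]}) :
  (forall sg, sg \in faces_of_size D k.+1 -> exists2 p : {mpoly R[n]},
     p \is [in R[n], k.-homog] & in_lsop_ideal D V ('X_[sqfree_mnm sg] - l * p)) ->
  (#|faces_of_size D k.+1| <= #|faces_of_size D k| * (d - k).+1)%N.
Proof.
move=> onto; have [alpha Halpha] := lefschetz_stress_span onto.
apply: (stress_count L_dual (alpha := alpha)) => c c_stress.
have [phi [ann phi_c]] := stress_extends D_closed L_dual c_stress.
exists (fun t => mpairing phi (l * 'X_[sqfree_mnm t])) => sg sgE.
by rewrite -Halpha // phi_c //; move: sgE; rewrite inE => /andP [_ /eqP].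
Qed.

End Lefschetz.

Lemma in_lsop_ideal_sub (R : realType) (n d : nat) (S D : complex_on n)
    (V : 'M[R]_(n, d)) (f : {mpoly R[n]}) :
  D \subset S -> in_lsop_ideal S V f -> in_lsop_ideal D V f.
Proof.
move=> DS [g [h ->]]; exists g, (fun t => if t \in S then 0%R else h t); congr (_ + _)%R.
rewrite big_mkcond [RHS]big_mkcond; apply: eq_bigr => t _.
have [tS|tS] := boolP (t \in S); first by rewrite mul0r; case: (t \in D).
by rewrite (contra (subsetP DS t) tS).
Qed.

Theorem corollary4p8 (R : realType) (n k : nat) (S : complex_on n)
    (V : 'M[R]_(n, 2 * k + 1)) :
  rational_sphere k S ->
  is_lsop S V ->
  hard_lefschetz S V ->
  forall D : complex_on n,
    is_simplicial_complex D -> D \subset S ->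
    (fsize D k.+1 <= (k + 2) * fsize D k)%N.
Proof.
(* The sphere hypothesis is only needed to prove hard Lefschetz, assumed here. *)
move=> _ lsop [l [_ lefschetz]] D [_ D_closed] DS.
have [L L_dual] := exists_dual_family (fun rho rhoD => lsop rho (subsetP DS rho rhoD)).
have [_ onto] := lefschetz k (leq_addr 1 _).
have [deg_top deg_lef] : (2 * k + 1 - k = k.+1 /\ 2 * k + 1 - 2 * k = 1)%N by lia.
rewrite deg_top deg_lef expr1 in onto.
rewrite mulnC (_ : k + 2 = (2 * k + 1 - k).+1)%N; last by lia.
apply: (lefschetz_face_bound D_closed L_dual (l := l)) => sg sgE.
have card_sg : #|sg| = k.+1 by move: sgE; rewrite inE => /andP [_ /eqP].
have [|p p_hom p_ideal] := onto 'X_[sqfree_mnm sg].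
  by rewrite dhomogX /= mdeg_sqfree_mnm card_sg.
exists p => //; rewrite -sqfree_monomialE.
by apply: in_lsop_ideal_sub DS _; rewrite sqfree_monomialE.
Qed.
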